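(* Let $n,k,m\ge1$ be integers, and let $r_0<r_1<\dots<r_{k-1}$ and $s_0<s_1<\dots<s_{k-1}$ be integers in $\{1,\dots,k+m\}$. Let $\bar r_0<\dots<\bar r_{m-1}$ and $\bar s_0<\dots<\bar s_{m-1}$ be the elements of $\{1,\dots,k+m\}\setminus\{r_0,\dots,r_{k-1}\}$ and $\{1,\dots,k+m\}\setminus\{s_0,\dots,s_{k-1}\}$ respectively. Then $$\det\Big(C_{2n-1}^{(2k+2m-1)}(2r_i-2\to2s_j-1)\Big)_{0\le i,j\le k-1}=(-1)^{\sum_{i=0}^{m-1}(\bar r_i+\bar s_i)}\det\Big(C_{-2n+1}^{(2k+2m-1)}(2\bar r_i-2\to2\bar s_j-1)\Big)_{0\le i,j\le m-1}.$$
   Context: For $N\ge0$ and $0\le r,s\le K$, $C_N^{(K)}(r\to s)$ is the number of lattice paths with steps $(1,1),(1,-1)$ from $(0,r)$ to $(N,s)$ never below the $x$-axis nor above $y=K$. For odd $K$, $F(x)=\sum_{N\ge0}C_N^{(K)}(r\to s)x^N$ is a rational function $p/q$ with $\deg p<\deg q$, $q(0)\ne0$, and for negative $N$ one defines $C_N^{(K)}(r\to s)$ by $\sum_{N\ge1}C_{-N}^{(K)}(r\to s)x^N=-F(1/x)$ (equivalently by running the linear recurrence backwards). *)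

From mathcomp Require Import all_boot all_order all_algebra.
Set Implicit Arguments. Unset Strict Implicit. Unset Printing Implicit Defensive.
Import Order.TTheory GRing.Theory Num.Theory.
Local Open Scope ring_scope.

(* C_N^{(K)}(r -> s) for N >= 0: the number of lattice paths with steps
   (1,1),(1,-1) from (0,r) to (N,s) staying in the strip 0 <= y <= K.
   A path is encoded by its sequence of heights y_0,...,y_N in {0..K}. *)
Definition Cpath (K N r s : nat) : nat :=
  #|[set p : {ffun 'I_N.+1 -> 'I_K.+1} |
     [&& val (p ord0) == r, val (p ord_max) == s &
        [forall i : 'I_N,
           (val (p (lift ord0 i)) == (val (p (widen_ord (leqnSn N) i))).+1)
        || (val (p (widen_ord (leqnSn N) i)) == (val (p (lift ord0 i))).+1)]]]|.

(* [is_Cneg K r s b] : b N = C_{-N}^{(K)}(r -> s) for all N >= 1 (and b 0 = 0),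
   i.e. sum_{N>=1} b N x^N = - F(1/x) where F = p/q, deg p < deg q, q(0) <> 0,
   is the generating function sum_{N>=0} C_N^{(K)}(r->s) x^N.
   With d = deg q, -F(1/x) = - P*(x)/Q*(x) where P*(x) = x^d p(1/x) and
   Q*(x) = x^d q(1/x) are polynomials (Q*(0) = lead coef q <> 0). *)
Definition revcoef (d : nat) (p : {poly rat}) (i : nat) : rat :=
  if (i <= d)%N then p`_(d - i) else 0.

Definition is_Cneg (K r s : nat) (b : nat -> rat) : Prop :=
  exists p q : {poly rat},
    [/\ (size p < size q)%N, q.[0] != 0,
        (forall N : nat,
           \sum_(i < N.+1) q`_i * (Cpath K (N - i) r s)%:R = p`_N) &
        (forall N : nat,
           \sum_(i < N.+1) revcoef (size q).-1 q i * b (N - i)%N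
             = - revcoef (size q).-1 p N)].

From mathcomp Require Import all_boot all_order all_algebra.
From mathcomp Require Import all_fingroup.
From mathcomp Require Import zify.
Set Implicit Arguments. Unset Strict Implicit. Unset Printing Implicit Defensive.
Import Order.TTheory GRing.Theory Num.Theory.

(* Let K = 2k+2m-1 and A = adjM K be the adjacency matrix
   of the path 0 - 1 - ... - K, so that C_N^(K)(x -> y) = (A^N)_{xy}
   (Cpath_pow).  Since K is odd, A is invertible (adjM_unit), and the
   defining recurrence of C_{-N} forces C_{-N}^(K)(x -> y) = (A^-N)_{xy}
   (is_Cneg_invpow).
   Heights split into even ones 2a and odd ones 2a+1 (a < k+m); A only joins
   heights of opposite parity, so the even-to-odd blocks B of A^N and D of
   A^-N (N odd) satisfy B D^T = 1 and det B = 1 (blk_adjM_pow_inv,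
   det_blk_adjM_pow).  The row sets {2r_i - 2}, {2rb_i - 2} and column sets
   {2s_j - 1}, {2sb_j - 1} are complementary in these blocks, and Jacobi's
   complementary-minor identity (jacobi_complementary) gives the theorem,
   with sign the product of the signs of the two merge permutations; these
   are computed by counting inversions (sign_merge_pair). *)

Section InversionParity.
Variable n : nat.
Implicit Types (g : 'I_n -> 'I_n) (s : 'S_n).

Definition inversions g : nat :=
  \sum_(p < n) \sum_(q < n) ((p < q) && (g q < g p)).

Definition inversion_parity g : bool :=
  \big[addb/false]_(p < n) \big[addb/false]_(q < n) ((p < q) && (g q < g p)).

Lemma odd_inversions g : odd (inversions g) = inversion_parity g.
Proof.
rewrite (big_morph odd oddD (erefl (odd 0))); apply: eq_bigr => p _.
by rewrite (big_morph odd oddD (erefl (odd 0))); apply: eq_bigr => q _; rewrite oddb.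
Qed.

Lemma eq_inversions g1 g2 : g1 =1 g2 -> inversions g1 = inversions g2.
Proof. by move=> e; apply: eq_bigr => p _; apply: eq_bigr => q _; rewrite !e. Qed.

(* Exclusive or as a disjunction, a form that lia understands. *)
Lemma addb_orE (a b : bool) : a (+) b = (a && ~~ b) || (~~ a && b).
Proof. by case: a; case: b. Qed.

Lemma big_addb_pred1 (a : 'I_n) (v : 'I_n -> bool) :
  \big[addb/false]_(p < n) ((p == a) && v p) = v a.
Proof. by rewrite (bigD1 a) //= eqxx big1 ?addbF // => p /negPf->. Qed.

Lemma tperm_adj_ltn (i j p q : 'I_n) : val j = (val i).+1 ->
  (tperm i j p < tperm i j q) (+) (p < q)
  = ((p == i) && (q == j)) || ((p == j) && (q == i)).
Proof.
move=> /= ji.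
case: tpermP => [->|->|/eqP pi /eqP pj]; case: tpermP => [->|->|/eqP qi /eqP qj];
  repeat match goal with H : is_true (?a != ?b) |- _ => move: H end;
  rewrite -!val_eqE /= addb_orE; lia.
Qed.

Lemma pair_indicator (i j p q : 'I_n) (c : 'I_n -> 'I_n -> bool) : i != j ->
  ((p == i) && (q == j) || (p == j) && (q == i)) && c p q =
  ((q == j) && ((p == i) && c i j)) (+) ((q == i) && ((p == j) && c j i)).
Proof.
move=> nij; have nji : j != i by rewrite eq_sym.
case: (boolP (p == i)) => [/eqP->|hpi]; case: (boolP (q == j)) => [/eqP->|hqj];
case: (boolP (p == j)) => [/eqP hpj|hpj]; case: (boolP (q == i)) => [/eqP hqi|hqi];
rewrite ?eqxx ?(negPf nij) ?(negPf nji) ?(negPf hpi) ?(negPf hqj) ?(negPf hpj)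
  ?(negPf hqi) /= ?addbF //; by subst; rewrite ?eqxx in nij.
Qed.

Lemma inversion_parity_tperm_adj s (i j : 'I_n) : val j = (val i).+1 ->
  inversion_parity (tperm i j * s)%g = ~~ inversion_parity s.
Proof.
move=> ji; have nij : i != j by apply/eqP => e; move: ji; rewrite e; lia.
rewrite /inversion_parity (reindex_inj (@perm_inj _ (tperm i j))).
under eq_bigr => p _ do rewrite (reindex_inj (@perm_inj _ (tperm i j))).
under eq_bigr => p _ do under eq_bigr => q _ do rewrite !permM !tpermK.
apply/esym/addbP; rewrite -big_split /=.
under eq_bigr => p _ do rewrite -big_split /=.
under eq_bigr => p _ do under eq_bigr => q _ do
  rewrite addbC -andb_addl tperm_adj_ltn // (pair_indicator _ _ (fun a b => s b < s a) nij).
under eq_bigr => p _ do rewrite big_split /= !big_addb_pred1.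
rewrite big_split /= !big_addb_pred1.
have /negPf sij : s j != s i by rewrite (inj_eq perm_inj) eq_sym.
by move: sij; case: ltngtP => // /val_inj ->; rewrite eqxx.
Qed.

(* Composing with any transposition (a b) adds (a != b) to the parity: a
   transposition at distance d.+2 is conjugate, by an adjacent one, to a
   transposition at distance d.+1. *)
Lemma inversion_parity_tperm s (a b : 'I_n) :
  inversion_parity (tperm a b * s)%g = (a != b) (+) inversion_parity s.
Proof.
wlog lab : a b / a <= b.
  move=> W; case: (leqP a b) => h; first exact: W.
  by rewrite tpermC eq_sym; apply: W; rewrite ltnW.
move: lab; rewrite leq_eqVlt => /orP[/eqP/val_inj->|lab]; first by rewrite tperm1 mul1g eqxx.
have [d bd] : exists d, val b = val a + d.+1 by exists (b - a.+1) => /=; lia.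
have -> : (a != b) = true by apply/eqP => e; move: bd; rewrite e; lia.
rewrite addTb.
elim: d a b bd {lab} s => [|d IH] a b bd s.
  by rewrite inversion_parity_tperm_adj //; rewrite bd addn1.
have a1_lt : a.+1 < n by move: (ltn_ord b) bd => /=; lia.
pose a' : 'I_n := Ordinal a1_lt.
have aa' : val a' = (val a).+1 by [].
have naa' : a != a' by rewrite -val_eqE aa' neq_ltn ltnSn.
have nab : a != b by rewrite -val_eqE bd neq_ltn addnS ltnS leq_addr.
have na'b : a' != b by rewrite -val_eqE aa' bd neq_ltn; apply/orP; left; lia.
have -> : tperm a b = (tperm a a' * tperm a' b * tperm a a')%g.
  by rewrite -mulgA -[X in (X * _)%g]tpermV -/(conjg _ _) tpermJ tpermR tpermD.
rewrite -!mulgA inversion_parity_tperm_adj // IH ?inversion_parity_tperm_adj //.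
  by rewrite negbK.
by rewrite bd aa' addSnnS.
Qed.

Lemma odd_inversions_perm s : odd (inversions s) = odd_perm s.
Proof.
rewrite odd_inversions; have [ts -> _] := prod_tpermP s.
elim: ts => [|t ts IH].
  rewrite big_nil odd_perm1 /inversion_parity big1 // => p _.
  by rewrite big1 // => q _; rewrite !perm1; case: ltngtP.
by rewrite big_cons inversion_parity_tperm odd_mul_tperm IH.
Qed.
End InversionParity.

Lemma increasing_ltn n (f : 'I_n -> nat) : (forall i j : 'I_n, i < j -> f i < f j) ->
  forall i j, (f i < f j) = (i < j).
Proof.
move=> hf i j; apply/idP/idP => [|/hf //].
by apply: contraLR; rewrite -!leqNgt leq_eqVlt => /orP[/eqP/val_inj->|/hf/ltnW].
Qed.

Lemma increasing_inj n (f : 'I_n -> nat) : (forall i j : 'I_n, i < j -> f i < f j) ->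
  injective f.
Proof.
move=> hf i j e; apply/val_inj/eqP.
by case: ltngtP => // /hf; rewrite e ltnn.
Qed.

(* r and rb are increasing, take values in {1,...,k+m} and have disjoint
   ranges: they enumerate a k-subset of {1,...,k+m} and its complement. *)
Definition complementary k m (r : 'I_k -> nat) (rb : 'I_m -> nat) : Prop :=
  [/\ forall i j : 'I_k, i < j -> r i < r j, forall i j : 'I_m, i < j -> rb i < rb j,
      forall i, 0 < r i <= k + m, forall j, 0 < rb j <= k + m & forall i j, r i != rb j].

(* The permutation of 'I_(k+m) listing r followed by rb (shifted down by 1). *)
Definition merge k m (r : 'I_k -> nat) (rb : 'I_m -> nat) (p : 'I_(k + m)) : 'I_(k + m) :=
  insubd p (match split p with inl i => (r i).-1 | inr j => (rb j).-1 end).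

Section Merge.
Variables (k m : nat) (r : 'I_k -> nat) (rb : 'I_m -> nat).
Hypothesis rrb : complementary r rb.

Lemma merge_lshift (i : 'I_k) : val (merge r rb (lshift m i)) = (r i).-1.
Proof.
case: rrb => _ _ r_range _ _; rewrite /merge (unsplitK (inl i)) val_insubd.
by have := r_range i; case: ifP => //; lia.
Qed.

Lemma merge_rshift (j : 'I_m) : val (merge r rb (rshift k j)) = (rb j).-1.
Proof.
case: rrb => _ _ _ rb_range _; rewrite /merge (unsplitK (inr j)) val_insubd.
by have := rb_range j; case: ifP => //; lia.
Qed.

Lemma merge_inj : injective (merge r rb).
Proof.
case: (rrb) => r_incr rb_incr r_range rb_range disj p q.
rewrite -(splitK p) -(splitK q).
case: (split p) => [i|j]; case: (split q) => [i'|j'] /= /(congr1 val);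
  rewrite ?merge_lshift ?merge_rshift.
- have := r_range i; have := r_range i' => ? ? e.
  by rewrite (increasing_inj r_incr (_ : r i = r i')) //; lia.
- have := r_range i; have := rb_range j' => ? ? e.
  by have := disj i j'; rewrite (_ : r i = rb j') ?eqxx //; lia.
- have := rb_range j; have := r_range i' => ? ? e.
  by have := disj i' j; rewrite (_ : r i' = rb j) ?eqxx //; lia.
- have := rb_range j; have := rb_range j' => ? ? e.
  by rewrite (increasing_inj rb_incr (_ : rb j = rb j')) //; lia.
Qed.

Lemma sum_ltn t N : \sum_(x < N) (t < x) = N - t.+1.
Proof.
elim: N => [|N IH]; first by rewrite big_ord0.
by rewrite big_ord_recr /= IH; case: (ltnP t N) => h /=; lia.
Qed.

Lemma sum_leq t N : \sum_(x < N) (t <= x) = N - t.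
Proof.
elim: N => [|N IH]; first by rewrite big_ord0.
by rewrite big_ord_recr /= IH; case: (leqP t N) => h /=; lia.
Qed.

Lemma inversions_merge :
  inversions (merge r rb) = \sum_(i < k) \sum_(j < m) (rb j < r i).
Proof.
case: (rrb) => r_incr rb_incr r_range rb_range _.
have r_sorted (i i' : 'I_k) : (i < i') && (r i' < r i) = false.
  by case: (ltnP i i') => // /r_incr; lia.
have rb_sorted (j j' : 'I_m) : (j < j') && (rb j' < rb j) = false.
  by case: (ltnP j j') => // /rb_incr; lia.
rewrite /inversions big_split_ord /= -[RHS]addn0; congr (_ + _).
  apply: eq_bigr => i _; rewrite big_split_ord /= -[RHS]add0n; congr (_ + _).
    rewrite big1 // => i' _; rewrite !merge_lshift /=.
    by have := r_range i; have := r_range i'; have := r_sorted i i'; lia.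
  apply: eq_bigr => j _; rewrite merge_lshift merge_rshift.
  by have := r_range i; have := rb_range j; have := ltn_ord i; lia.
apply: big1 => j _; rewrite big_split_ord /= big1 ?add0n.
  apply: big1 => j' _; rewrite !merge_rshift /= ltn_add2l.
  by have := rb_range j; have := rb_range j'; have := rb_sorted j j'; lia.
by move=> i _; have := ltn_ord i; lia.
Qed.

(* Counting the elements of {1,...,k+m} that are >= rb_j, via the merge. *)
Lemma count_above_rb (j : 'I_m) :
  \sum_(i < k) (rb j < r i) + rb j + (m - j.+1) = k + m.
Proof.
case: (rrb) => r_incr rb_incr r_range rb_range _.
have E : \sum_(x < k + m) (rb j <= x) = k + m - rb j by rewrite sum_leq.
rewrite (reindex_inj merge_inj) big_split_ord /= in E.
have E1 : \sum_(i < k) (rb j <= merge r rb (lshift m i)) = \sum_(i < k) (rb j < r i).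
  by apply: eq_bigr => i _; rewrite merge_lshift; have := r_range i; lia.
have E2 : \sum_(j' < m) (rb j <= merge r rb (rshift k j')) = m - j.+1.
  rewrite -sum_ltn; apply: eq_bigr => j' _.
  by rewrite merge_rshift -(increasing_ltn rb_incr); have := rb_range j'; lia.
by rewrite E1 E2 in E; have := rb_range j; lia.
Qed.

Lemma inversions_merge_total :
  inversions (merge r rb) + \sum_(j < m) rb j + \sum_(j < m) (m - j.+1) = m * (k + m).
Proof.
rewrite inversions_merge exchange_big /= -!big_split /=.
by rewrite (eq_bigr (fun _ => k + m)) ?sum_nat_const ?card_ord // => j _; rewrite count_above_rb.
Qed.
End Merge.

Definition merge_perm k m r rb (rrb : @complementary k m r rb) : 'S_(k + m) :=
  perm (merge_inj rrb).

Definition adjb (a b : nat) : bool := (a == b.+1) || (b == a.+1).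

Lemma adjbC a b : adjb a b = adjb b a.
Proof. by rewrite /adjb orbC. Qed.

Lemma forall_ord_recr n (P : pred 'I_n.+1) :
  [forall i, P i] = [forall i : 'I_n, P (widen_ord (leqnSn n) i)] && P ord_max.
Proof.
apply/forallP/andP => [W|[/forallP W Pmax] i]; first by split => //; apply/forallP.
case: (ltnP i n) => [lt_in|le_ni]; first by have := W (Ordinal lt_in); congr P; apply: val_inj.
by rewrite (_ : i = ord_max) //; apply: val_inj => /=; have := ltn_ord i; lia.
Qed.

Section Walks.
Variable K : nat.

Definition is_walk N (p : {ffun 'I_N.+1 -> 'I_K.+1}) : bool :=
  [forall i : 'I_N, adjb (p (lift ord0 i)) (p (widen_ord (leqnSn N) i))].

Lemma CpathE N x y : Cpath K N x y =
  \sum_(p : {ffun 'I_N.+1 -> 'I_K.+1}) [&& val (p ord0) == x, val (p ord_max) == y & is_walk p].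
Proof. by rewrite /Cpath cardsE -sum1_card big_mkcond. Qed.

Definition snoc_walk N (pt : {ffun 'I_N.+1 -> 'I_K.+1} * 'I_K.+1) : {ffun 'I_N.+2 -> 'I_K.+1} :=
  [ffun i : 'I_N.+2 => if (i : nat) < N.+1 then pt.1 (inord i) else pt.2].

Definition unsnoc_walk N (q : {ffun 'I_N.+2 -> 'I_K.+1}) : {ffun 'I_N.+1 -> 'I_K.+1} * 'I_K.+1 :=
  ([ffun j : 'I_N.+1 => q (widen_ord (leqnSn _) j)], q ord_max).

Lemma snoc_walk_bij N : bijective (@snoc_walk N).
Proof.
exists (@unsnoc_walk N) => [[p t]|q].
  rewrite /unsnoc_walk /snoc_walk !ffunE /= ltnn; congr pair.
  by apply/ffunP => j; rewrite !ffunE /= ltn_ord inord_val.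
apply/ffunP => i; rewrite /unsnoc_walk /snoc_walk !ffunE /=.
case: ltnP => [lt_iN|le_Ni]; rewrite ?ffunE; congr (q _); apply: val_inj => /=.
  by rewrite inordK.
by have := ltn_ord i; lia.
Qed.

Lemma snoc_walk_widen N p t (i : 'I_N.+1) :
  snoc_walk (p, t) (widen_ord (leqnSn _) i) = p i.
Proof. by rewrite ffunE /= ltn_ord inord_val. Qed.

Lemma snoc_walk_first N p t : @snoc_walk N (p, t) ord0 = p ord0.
Proof.
by rewrite (_ : ord0 = widen_ord (leqnSn N.+1) ord0) ?snoc_walk_widen //; apply: val_inj.
Qed.

Lemma snoc_walk_last N p t : @snoc_walk N (p, t) ord_max = t.
Proof. by rewrite ffunE /= ltnn. Qed.

Lemma is_walk_snoc N p t :
  is_walk (@snoc_walk N (p, t)) = is_walk p && adjb t (p ord_max).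
Proof.
rewrite /is_walk forall_ord_recr; congr andb.
  apply: eq_forallb => i.
  rewrite (_ : lift ord0 _ = widen_ord (leqnSn N.+1) (lift ord0 i)); last exact: val_inj.
  by rewrite !snoc_walk_widen.
rewrite (_ : lift ord0 ord_max = ord_max); last exact: val_inj.
by rewrite snoc_walk_last snoc_walk_widen.
Qed.

(* First-step analysis from the end: a walk of length N+1 ending at y is a
   walk of length N ending at a neighbour t of y. *)
Lemma Cpath_rec N x (y : 'I_K.+1) :
  Cpath K N.+1 x y = \sum_(t : 'I_K.+1) Cpath K N x t * adjb t y.
Proof.
rewrite CpathE (reindex _ (onW_bij _ (@snoc_walk_bij N))).
transitivity (\sum_(p : {ffun 'I_N.+1 -> 'I_K.+1}) \sum_(t : 'I_K.+1)
  [&& val (snoc_walk (p, t) ord0) == x, val (snoc_walk (p, t) ord_max) == y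
    & is_walk (snoc_walk (p, t))]).
  by rewrite pair_big; apply: eq_bigr => -[p t].
under eq_bigr => p _ do under eq_bigr => t _ do
  rewrite snoc_walk_first snoc_walk_last is_walk_snoc.
under [RHS]eq_bigr => t _ do rewrite CpathE big_distrl /=.
rewrite [RHS]exchange_big /=; apply: eq_bigr => p _.
rewrite (bigD1 y) // [in RHS](bigD1 (p ord_max)) //= !big1 ?addn0.
- by rewrite eqxx adjbC; case: (_ == x); case: is_walk; case: adjb; rewrite /= ?eqxx.
- by move=> t; rewrite eq_sym -val_eqE => /negPf ne_t; rewrite ne_t andbF.
- by move=> t; rewrite -val_eqE => /negPf ne_t; rewrite ne_t andbF.
Qed.
End Walks.

Local Open Scope ring_scope.

(* The product of the signs of the merge permutations of two complementary
   pairs is (-1)^(sum_j (rb_j + sb_j)): by inversions_merge_total, the parity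
   of each merge is that of sum_j rb_j up to a term depending only on k, m. *)
Lemma sign_merge_pair (R : nzRingType) k m r rb s sb
    (rrb : @complementary k m r rb) (ssb : @complementary k m s sb) :
  (-1) ^+ odd_perm (merge_perm rrb) * (-1) ^+ odd_perm (merge_perm ssb)
  = (-1) ^+ (\sum_(j < m) (rb j + sb j))%N :> R.
Proof.
rewrite -signr_addb -[RHS]signr_odd; congr ((-1) ^+ (nat_of_bool _)).
rewrite -!odd_inversions_perm !(eq_inversions (permE _)) -oddD.
have := inversions_merge_total rrb; have := inversions_merge_total ssb.
rewrite big_split /=.
move: (inversions _) (inversions _) (\sum_(j < m) rb j)%N (\sum_(j < m) sb j)%N
  (\sum_(j < m) (m - j.+1))%N (m * (k + m))%N => X Y P Q C D; lia.
Qed.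

Definition adjM K : 'M[rat]_K.+1 := \matrix_(a, b) (adjb a b)%:R.

Lemma Cpath0 K (x y : 'I_K.+1) : Cpath K 0 x y = (x == y).
Proof.
rewrite CpathE (reindex (fun t : 'I_K.+1 => [ffun _ : 'I_1 => t])) /=; last first.
  apply: onW_bij; exists (fun p : {ffun 'I_1 -> 'I_K.+1} => p ord0) => [t|p].
    by rewrite ffunE.
  by apply/ffunP => i; rewrite ffunE (ord1 i).
rewrite (bigD1 x) //= big1 => [|t /negPf ne_tx]; rewrite !ffunE /is_walk.
  by rewrite eqxx addn0 (_ : [forall i : 'I_0, _] = true) ?andbT //; apply/forallP => -[].
by move: ne_tx; rewrite -val_eqE => ->.
Qed.

Lemma Cpath_pow K N (x y : 'I_K.+1) : (Cpath K N x y)%:R = (adjM K ^+ N) x y.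
Proof.
elim: N x y => [|N IH] x y; first by rewrite Cpath0 expr0 mxE.
rewrite Cpath_rec exprSr mxE natr_sum; apply: eq_bigr => t _.
by rewrite natrM IH mxE.
Qed.

Definition zero_ext (R : nzRingType) n (v : 'I_n.+1 -> R) (c : nat) : R :=
  if (c < n.+1)%N then v (inord c) else 0.

Lemma sum_pick_nat (R : nzRingType) n (F : 'I_n.+1 -> R) c :
  \sum_(a : 'I_n.+1) F a * ((a : nat) == c)%:R = zero_ext F c.
Proof.
rewrite /zero_ext; case: ifP => lt_cn.
  rewrite (bigD1 (inord c)) //= inordK // eqxx mulr1 big1 ?addr0 // => a ne_ac.
  case: eqP => [e|]; last by rewrite mulr0.
  by case/eqP: ne_ac; apply: val_inj; rewrite /= inordK // e.
rewrite big1 // => a _; case: eqP => [e|]; last by rewrite mulr0.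
by move: lt_cn (ltn_ord a); rewrite e => ->.
Qed.

Lemma sum_adjb (R : nzRingType) n (F : 'I_n.+1 -> R) (y : nat) :
  \sum_(a : 'I_n.+1) F a * (adjb a y)%:R =
  zero_ext F y.+1 + (if y is y'.+1 then zero_ext F y' else 0).
Proof.
have adjbE (a : 'I_n.+1) : (adjb a y)%:R =
    ((a : nat) == y.+1)%:R + ((a : nat) == y.-1)%:R * (0 < y)%:R :> R.
  rewrite /adjb; case: y => [|y] /=.
    by rewrite (_ : (0 == a.+1)%N = false) // orbF mulr0 addr0.
  rewrite eqSS mulr1 [(y == _)%N]eq_sym.
  by case: (nat_of_ord a =P y.+2) => [e|ne]; case: (nat_of_ord a =P y) => [e'|ne'] /=;
    rewrite ?addr0 ?add0r //; lia.
under eq_bigr => a _ do rewrite adjbE mulrDr mulrA.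
rewrite big_split /= sum_pick_nat -big_distrl /= sum_pick_nat.
by case: y {adjbE} => [|y] /=; rewrite ?mulr0 ?mulr1.
Qed.

(* For odd K the adjacency matrix is invertible: if v *m adjM = 0 then v_{y+1} = - v_{y-1}, which
   forces the odd entries to vanish (from v_1 = 0) and the even ones too
   (from v_{K+1} = 0, reading downwards). *)
Lemma adjM_unit K : odd K -> adjM K \in unitmx.
Proof.
move=> oK; rewrite unitmxE unitfE; apply/det0P => -[v nv0 vA].
pose w := zero_ext (v 0).
have rel y : (y <= K)%N -> w y.+1 + (if y is y'.+1 then w y' else 0) = 0.
  move=> le_yK; rewrite -sum_adjb.
  transitivity ((v *m adjM K) 0 (inord y)); last by rewrite vA mxE.
  by rewrite mxE; apply: eq_bigr => a _; rewrite mxE inordK.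
have w_out c : (K < c)%N -> w c = 0 by rewrite /w /zero_ext; case: ifP => //; lia.
have w_odd j : w j.*2.+1 = 0.
  elim: j => [|j IH]; first by have := rel 0%N (leq0n _); rewrite addr0.
  case: (leqP j.*2.+2 K) => [le|gt]; last by apply: w_out; lia.
  by have := rel _ le; rewrite /= IH addr0 doubleS.
have w_even t : w (K.+1 - t.*2)%N = 0.
  elim: t => [|t IH]; first by rewrite subn0 w_out.
  case: (leqP t.*2.+1 K) => [le|gt]; last first.
    by rewrite (_ : (K.+1 - t.+1.*2 = K.+1 - t.*2)%N) //; move: oK gt; lia.
  have := rel (K - t.*2)%N (leq_subr _ _).
  rewrite (_ : (K - t.*2 = (K - t.*2.+1).+1)%N); last lia.
  rewrite /= (_ : ((K - t.*2.+1).+2 = K.+1 - t.*2)%N); last lia.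
  by rewrite IH add0r (_ : (K.+1 - t.+1.*2 = K - t.*2.+1)%N) //; lia.
apply: (negP nv0); apply/eqP/rowP => a; rewrite mxE.
have lt_aK := ltn_ord a; case/boolP: (odd a) => odd_a.
  have := w_odd a./2; rewrite /w /zero_ext (_ : (a./2.*2.+1 = a)%N); last by move: odd_a; lia.
  by rewrite lt_aK inord_val.
have := w_even ((K.+1 - a)./2); rewrite /w /zero_ext.
rewrite (_ : (K.+1 - (K.+1 - a)./2.*2 = a)%N); last by move: odd_a oK lt_aK; lia.
by rewrite lt_aK inord_val.
Qed.

Lemma jacobi_minor (R : comNzRingType) k m (M N : 'M[R]_(k + m)) : M *m N = 1%:M ->
  \det (ulsubmx M) = \det M * \det (drsubmx N).
Proof.
move=> MN.
have E : M *m block_mx 1%:M (ursubmx N) 0 (drsubmx N) = block_mx (ulsubmx M) 0 (dlsubmx M) 1%:M.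
  move: MN; rewrite -{1}(submxK M) -{1}(submxK N) mulmx_block (scalar_mx_block k m).
  move/eq_block_mx => [_ e12 _ e22].
  by rewrite -{1}(submxK M) mulmx_block e12 e22 !mulmx1 !mulmx0 !addr0.
have := congr1 determinant E.
by rewrite det_mulmx det_ublock det_lblock !det1 mulr1 mul1r => ->.
Qed.

Lemma jacobi_complementary (R : comNzRingType) k m (B D : 'M[R]_(k + m))
    (rho sigma : 'S_(k + m)) : B *m D^T = 1%:M ->
  \det (\matrix_(i < k, j < k) B (rho (lshift m i)) (sigma (lshift m j)))
  = \det B * (-1) ^+ odd_perm rho * (-1) ^+ odd_perm sigma *
    \det (\matrix_(i < m, j < m) D (rho (rshift k i)) (sigma (rshift k j))).
Proof.
move=> BD.
pose M := \matrix_(p, q) B (rho p) (sigma q).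
pose N := \matrix_(q, p) D (rho p) (sigma q).
have MN : M *m N = 1%:M.
  apply/matrixP => p p'; rewrite !mxE.
  transitivity ((B *m D^T) (rho p) (rho p')); last by rewrite BD !mxE (inj_eq perm_inj).
  by rewrite mxE [RHS](reindex_perm sigma); apply: eq_bigr => q _; rewrite !mxE.
have detM : \det M = \det B * (-1) ^+ odd_perm rho * (-1) ^+ odd_perm sigma.
  have -> : M = row_perm rho (col_perm sigma B) by apply/matrixP => p q; rewrite !mxE.
  by rewrite row_permE col_permE !det_mulmx !det_perm odd_permV mulrCA mulrA.
have -> : \matrix_(i < k, j < k) B (rho (lshift m i)) (sigma (lshift m j)) = ulsubmx M.
  by apply/matrixP => i j; rewrite !mxE.
have -> : \matrix_(i < m, j < m) D (rho (rshift k i)) (sigma (rshift k j)) = (drsubmx N)^T.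
  by apply/matrixP => i j; rewrite !mxE.
by rewrite det_tr (jacobi_minor MN) detM.
Qed.

Lemma invpow_mul_pow (R : nzRingType) (A Ai : R) : Ai * A = 1 -> forall a b,
  Ai ^+ a * A ^+ b = if (a <= b)%N then A ^+ (b - a) else Ai ^+ (a - b).
Proof.
move=> AiA; elim=> [|a IH] b; first by rewrite expr0 mul1r subn0.
case: b => [|b]; first by rewrite expr0 mulr1.
by rewrite exprSr exprS -mulrA (mulrA Ai) AiA mul1r IH.
Qed.

Lemma horner_mx_sum (F : fieldType) n (A : 'M[F]_n.+1) p :
  horner_mx A p = \sum_(i < size p) p`_i *: A ^+ i.
Proof.
rewrite -{1}[p]coefK poly_def linear_sum; apply: eq_bigr => i _.
by rewrite linearZ rmorphXn /= horner_mx_X.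
Qed.

(* By Cayley-Hamilton, the inverse of an invertible matrix is a polynomial in it. *)
Lemma invmx_poly (F : fieldType) n (A : 'M[F]_n.+1) : A \in unitmx ->
  exists c : nat -> F, exists d, invmx A = \sum_(l < d) c l *: A ^+ l.
Proof.
move=> uA.
have CH := Cayley_Hamilton A; rewrite horner_mx_sum size_char_poly big_ord_recl /= expr0 in CH.
set chi := char_poly A in CH.
have chi0 : chi`_0 != 0.
  by rewrite /chi char_poly_det mulf_neq0 ?signr_eq0 -?unitfE -?unitmxE.
exists (fun l : nat => - (chi`_0)^-1 * chi`_l.+1), n.+1.
have E : invmx A * ((chi`_0)%:A + \sum_(i < n.+1) chi`_(bump 0 i) *: A ^+ bump 0 i) = 0.
  by rewrite CH mulr0.
rewrite mulrDr big_distrr /= in E.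
have S : \sum_(i < n.+1) invmx A * (chi`_(bump 0 i) *: A ^+ bump 0 i)
       = \sum_(i < n.+1) chi`_i.+1 *: A ^+ i.
  apply: eq_bigr => i _.
  by rewrite -scalerAr /bump add1n exprS mulrA -mulmxE mulVmx // mulmxE mul1r.
move/eqP: E; rewrite S mulr_algr addr_eq0 => /eqP E.
rewrite -[invmx A](scalerK chi0) E scalerN -scaleNr scaler_sumr; apply: eq_bigr => l _.
by rewrite scalerA.
Qed.

Lemma entry_annihilated_invpow (F : fieldType) n (A W : 'M[F]_n.+1) x y : A \in unitmx ->
  (forall j, (A ^+ j * W) x y = 0) -> forall N j, (A ^+ j * invmx A ^+ N * W) x y = 0.
Proof.
move=> uA hA; have [c [d E]] := invmx_poly uA.
elim=> [|N IH] j; first by rewrite expr0 mulr1.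
rewrite exprS {1}E mulr_suml mulr_sumr !mulr_suml summxE big1 // => l _.
by rewrite -scalerAl -scalerAr -scalerAl mxE mulrA -exprD IH mulr0.
Qed.

Lemma sum_ord_zero_tail (R : nmodType) n1 n2 (F : nat -> R) : (n1 <= n2)%N ->
  (forall i, (n1 <= i < n2)%N -> F i = 0) -> \sum_(i < n2) F i = \sum_(i < n1) F i.
Proof.
move=> le12 F0; rewrite -!(big_mkord xpredT) (big_cat_nat (leq0n n1) le12) /=.
by rewrite [X in _ + X]big1_seq ?addr0 // => i /andP[_]; rewrite mem_index_iota; exact: F0.
Qed.

Lemma sum_ord_rev (R : nmodType) n (F : nat -> R) : \sum_(i < n) F i = \sum_(i < n) F (n - i.+1)%N.
Proof.
rewrite -(big_mkord xpredT F) -(big_mkord xpredT (fun i => F (n - i.+1)%N)).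
by rewrite big_nat_rev add0n.
Qed.

Lemma sum_ord_split (R : nmodType) a b (F : nat -> R) :
  \sum_(i < a + b) F i = \sum_(i < a) F i + \sum_(t < b) F (t + a)%N.
Proof.
rewrite -!(big_mkord xpredT F) -(big_mkord xpredT (fun t => F (t + a)%N)).
rewrite (big_cat_nat (leq0n a) (leq_addr b a)) /=; congr (_ + _).
by rewrite -{1}[a]add0n big_addn addKn.
Qed.

Lemma recurrence_uniq (R : idomainType) (a u v : nat -> R) : a 0%N != 0 ->
  (forall N, \sum_(i < N.+1) a i * u (N - i)%N = \sum_(i < N.+1) a i * v (N - i)%N) ->
  forall N, u N = v N.
Proof.
move=> a0 H; elim/ltn_ind => N IH.
have := H N; rewrite !big_ord_recl /= !subn0.
rewrite (eq_bigr (fun i : 'I_N => a (bump 0 i) * v (N - bump 0 i)%N)).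
  by move/addIr/(mulfI a0).
by move=> i _; rewrite IH // /bump add1n; have := ltn_ord i; lia.
Qed.

Section NegativePowers.
Variables (n : nat) (A : 'M[rat]_n.+1) (x y : 'I_n.+1) (p q : {poly rat}).
Hypotheses (uA : A \in unitmx) (size_pq : (size p < size q)%N) (q0 : q.[0] != 0).
Hypothesis forward : forall N, \sum_(i < N.+1) q`_i * (A ^+ (N - i)) x y = p`_N.

Let d := (size q).-1.
Let Ai := invmx A.
Let W := \sum_(i < d.+1) q`_i *: A ^+ (d - i).

Let size_q : size q = d.+1.
Proof.
rewrite /d prednK // size_poly_gt0; by apply: contraNneq q0 => ->; rewrite horner0.
Qed.

Let q_high i : (d < i)%N -> q`_i = 0.
Proof. by move=> lt_di; rewrite nth_default // size_q. Qed.

Let p_high i : (d <= i)%N -> p`_i = 0.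
Proof. by move=> le_di; rewrite nth_default // (leq_trans _ le_di) // -ltnS -size_q. Qed.

Let AiA : Ai * A = 1.
Proof. by rewrite -mulmxE mulVmx. Qed.

(* The coefficients of (1/x)^d q(x) annihilate every A^j, in entry (x, y). *)
Lemma forward_annihilates j : (A ^+ j * W) x y = 0.
Proof.
rewrite mulr_sumr summxE; have := forward (j + d); rewrite (p_high (leq_addl _ _)).
rewrite (@sum_ord_zero_tail _ d.+1 (j + d).+1 (fun i => q`_i * (A ^+ (j + d - i)) x y)).
- move=> E; apply: (etrans _ E); apply: eq_bigr => i _.
  by rewrite -scalerAr mxE -exprD addnBA // -ltnS.
- by rewrite ltnS leq_addl.
- by move=> i /andP[lt_di _]; rewrite q_high ?mul0r.
Qed.

Lemma backward_annihilates N : (Ai ^+ N * W) x y = 0.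
Proof.
have := entry_annihilated_invpow uA forward_annihilates N 0.
by rewrite expr0 mul1r.
Qed.

Definition backward_seq (N : nat) : rat := if N is 0%N then 0 else (Ai ^+ N) x y.

Definition mixed_pow (N k : nat) : rat :=
  if (N <= k)%N then (A ^+ (k - N)) x y else (Ai ^+ (N - k)) x y.

Lemma backward_annihilatesE N : \sum_(i < d.+1) q`_i * mixed_pow N (d - i) = 0.
Proof.
rewrite -[RHS](backward_annihilates N) mulr_sumr summxE; apply: eq_bigr => i _.
by rewrite -scalerAr mxE invpow_mul_pow // /mixed_pow; case: ifP.
Qed.

Lemma backward_recurrence N :
  \sum_(i < N.+1) revcoef d q i * backward_seq (N - i)%N = - revcoef d p N.
Proof.
have Z := backward_annihilatesE N.
case: (leqP N d) => [le_Nd|lt_dN].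
- rewrite {2}/revcoef le_Nd big_ord_recr /= subnn mulr0 addr0.
  rewrite (sum_ord_rev N (fun i => revcoef d q i * backward_seq (N - i)%N)).
  rewrite (_ : d.+1 = ((d - N).+1 + N)%N) in Z; last lia.
  rewrite (sum_ord_split _ _ (fun i => q`_i * mixed_pow N (d - i))) /= in Z.
  have E1 : \sum_(i < (d - N).+1) q`_i * mixed_pow N (d - i) = p`_(d - N).
    rewrite -forward; apply: eq_bigr => i _; have lt_i := ltn_ord i; rewrite /mixed_pow.
    rewrite (_ : (N <= d - i)%N = true); last lia.
    by rewrite (_ : (d - i - N = d - N - i)%N) //; lia.
  move/eqP: Z; rewrite E1 addrC addr_eq0 => /eqP <-.
  apply: eq_bigr => t _; have lt_t := ltn_ord t.
  rewrite /revcoef /backward_seq /mixed_pow (_ : (N - t.+1 <= d)%N = true); last lia.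
  rewrite (_ : (N <= d - (t + (d - N).+1))%N = false); last lia.
  rewrite (_ : (d - (N - t.+1) = t + (d - N).+1)%N); last lia.
  rewrite (_ : (N - (N - t.+1) = t.+1)%N); last lia.
  by rewrite (_ : (N - (d - (t + (d - N).+1)) = t.+1)%N); last lia.
- rewrite {2}/revcoef (_ : (N <= d)%N = false); last lia.
  rewrite oppr0; apply: etrans Z.
  rewrite (@sum_ord_zero_tail _ d.+1 N.+1 (fun i => revcoef d q i * backward_seq (N - i)%N));
    last 2 first.
  + lia.
  + by move=> i /andP[le_di _]; rewrite /revcoef (_ : (i <= d)%N = false) ?mul0r //; lia.
  rewrite (sum_ord_rev d.+1 (fun i => q`_i * mixed_pow N (d - i))).
  apply: eq_bigr => i _.
  have lt_i := ltn_ord i.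
  rewrite /revcoef /mixed_pow (_ : (i <= d)%N = true); last lia.
  rewrite (_ : (d.+1 - i.+1 = d - i)%N); last lia.
  rewrite (_ : (N <= d - (d - i))%N = false); last lia.
  rewrite (_ : (N - (d - (d - i)) = N - i)%N); last lia.
  by rewrite /backward_seq (_ : (N - i = (N - i).-1.+1)%N) //; lia.
Qed.
End NegativePowers.

Lemma is_Cneg_invpow K (x y : 'I_K.+1) b : odd K -> is_Cneg K x y b ->
  forall N, (0 < N)%N -> b N = (invmx (adjM K) ^+ N) x y.
Proof.
move=> oK [p [q [size_pq q0 forward backward]]].
have uA := adjM_unit oK.
have forwardA N : \sum_(i < N.+1) q`_i * (adjM K ^+ (N - i)) x y = p`_N.
  by rewrite -forward; apply: eq_bigr => i _; rewrite Cpath_pow.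
move=> N lt0N; rewrite (@recurrence_uniq _ (revcoef (size q).-1 q) b
  (backward_seq (adjM K) x y) _ _ N); first by case: N lt0N.
- by rewrite /revcoef leq0n subn0 -lead_coefE lead_coef_eq0;
    apply: contraNneq q0 => ->; rewrite horner0.
- by move=> M; rewrite backward (backward_recurrence uA size_pq q0 forwardA).
Qed.

Lemma sum_double (R : nmodType) n (G : nat -> R) :
  \sum_(t < n.*2) G t = \sum_(a < n) (G a.*2 + G a.*2.+1).
Proof.
elim: n => [|n IH]; first by rewrite !big_ord0.
by rewrite doubleS !big_ord_recr /= IH addrA.
Qed.

Section EvenOddBlocks.
Variables (K L : nat).
Hypothesis KL : K.+1 = L.*2.

Definition even_ht (a : 'I_L) : 'I_K.+1 := inord a.*2.
Definition odd_ht (a : 'I_L) : 'I_K.+1 := inord a.*2.+1.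

Lemma even_htE a : (even_ht a : nat) = a.*2.
Proof. by rewrite /even_ht inordK //; have := ltn_ord a; lia. Qed.

Lemma odd_htE a : (odd_ht a : nat) = a.*2.+1.
Proof. by rewrite /odd_ht inordK //; have := ltn_ord a; lia. Qed.

Lemma sum_even_odd (R : nmodType) (F : 'I_K.+1 -> R) :
  \sum_(t : 'I_K.+1) F t = \sum_(a : 'I_L) (F (even_ht a) + F (odd_ht a)).
Proof.
rewrite (eq_bigr (fun t : 'I_K.+1 => F (inord t))); last by move=> t _; rewrite inord_val.
by have := sum_double L (fun t => F (inord t)); rewrite -KL => ->.
Qed.

Definition blk (R : Type) (M : 'M[R]_K.+1) (f g : 'I_L -> 'I_K.+1) : 'M[R]_L :=
  \matrix_(a, b) M (f a) (g b).

Lemma blk_mul (R : nzRingType) (M N : 'M[R]_K.+1) f g :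
  blk (M * N) f g = blk M f even_ht *m blk N even_ht g + blk M f odd_ht *m blk N odd_ht g.
Proof.
apply/matrixP => a b; rewrite !mxE sum_even_odd big_split /=.
by congr (_ + _); apply: eq_bigr => c _; rewrite !mxE.
Qed.

Lemma blk_tr (R : Type) (M : 'M[R]_K.+1) f g : M^T = M -> blk M g f = (blk M f g)^T.
Proof. by move=> symM; apply/matrixP => a c; rewrite !mxE -{1}symM mxE. Qed.

Lemma blk1 (R : nzRingType) : blk (1 : 'M[R]_K.+1) even_ht even_ht = 1.
Proof.
apply/matrixP => a c; rewrite !mxE; congr ((_ : bool)%:R).
apply/eqP/eqP => [/(congr1 (@nat_of_ord _))|-> //]; rewrite !even_htE => e.
by apply: val_inj => /=; move: e; lia.
Qed.

Definition parity_pattern (R : nzRingType) (b : bool) (M : 'M[R]_K.+1) :=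
  forall x y : 'I_K.+1, odd x (+) odd y = ~~ b -> M x y = 0.

Lemma parity_pattern_mul (R : nzRingType) b1 b2 (M N : 'M[R]_K.+1) :
  parity_pattern b1 M -> parity_pattern b2 N -> parity_pattern (b1 (+) b2) (M * N).
Proof.
move=> pM pN x y xy; rewrite -mulmxE mxE big1 // => t _.
case: (boolP (odd x (+) odd t == b1)) => [/eqP xt|/negPf xt].
  rewrite pN ?mulr0 //; move: xy xt.
  by case: (odd x); case: (odd t); case: (odd y); case: (b1); case: (b2).
by rewrite pM ?mul0r //; move: xt; case: (odd x (+) odd t); case: (b1).
Qed.

Lemma blk_parity0 (R : nzRingType) b (M : 'M[R]_K.+1) (f g : 'I_L -> 'I_K.+1) :
  parity_pattern b M ->
  (forall a c, odd (f a) (+) odd (g c) = ~~ b) -> blk M f g = 0.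
Proof. by move=> pM fg; apply/matrixP => a c; rewrite !mxE pM. Qed.

Lemma odd_even_ht a : odd (even_ht a) = false.
Proof. by rewrite even_htE odd_double. Qed.

Lemma odd_odd_ht a : odd (odd_ht a) = true.
Proof. by rewrite odd_htE /= odd_double. Qed.
End EvenOddBlocks.
Arguments even_ht K {L} a.
Arguments odd_ht K {L} a.

Lemma sym_pow (R : comNzRingType) n (M : 'M[R]_n.+1) N : M^T = M -> (M ^+ N)^T = M ^+ N.
Proof.
move=> symM; elim: N => [|N IH]; first by rewrite expr0 trmx1.
by rewrite {1}exprSr -mulmxE trmx_mul IH symM mulmxE -exprS.
Qed.

Section PathBlocks.
Variables (K L : nat).
Hypothesis KL : K.+1 = L.*2.

Lemma odd_K : odd K.
Proof. by move: KL => /(congr1 odd) /=; rewrite odd_double; case: (odd K). Qed.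

Lemma adjM_tr : (adjM K)^T = adjM K.
Proof. by apply/matrixP => x y; rewrite !mxE adjbC. Qed.

(* adjM changes parity, so adjM^N changes parity exactly when N is odd. *)
Lemma parity_pattern_adjM_pow N : parity_pattern (odd N) (adjM K ^+ N).
Proof.
elim: N => [|N IH].
  by move=> x y /=; rewrite expr0 mxE; case: eqP => [->|] //; case: (odd y).
have adj : parity_pattern true (adjM K).
  move=> x y; rewrite mxE /adjb.
  by case: eqP => [->|_] /=; [case: (odd y)|case: eqP => [->|_] //=; case: (odd x)].
by have := parity_pattern_mul IH adj; rewrite addbT exprSr.
Qed.

Notation ev := (@even_ht K L).
Notation od := (@odd_ht K L).

(* The even-to-odd block of adjM is unitriangular: 2a is adjacent to 2a+1
   and to 2a-1 only. *)
Lemma det_blk_adjM : \det (blk (adjM K) ev od) = 1.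
Proof.
rewrite det_trig.
  by rewrite big1 // => i _; rewrite !mxE even_htE // odd_htE // /adjb eqxx orbT.
apply/is_trig_mxP => i j lt_ij; rewrite !mxE even_htE // odd_htE // /adjb.
rewrite (_ : (i.*2 == j.*2.+2) = false); last lia.
by rewrite (_ : (j.*2.+1 == i.*2.+1) = false); last lia.
Qed.

(* Since adjM only joins heights of opposite parity, the even-to-odd block of
   an odd power is a product of even-to-odd blocks of adjM and their
   transposes, hence has determinant 1. *)
Lemma det_blk_adjM_pow j : \det (blk (adjM K ^+ j.*2.+1) ev od) = 1.
Proof.
have adj : parity_pattern true (adjM K) := @parity_pattern_adjM_pow 1%N.
have Z_od : blk (adjM K) od od = 0.
  by apply: (blk_parity0 adj) => a c; rewrite !odd_odd_ht.
have Z_ev : blk (adjM K) ev ev = 0.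
  by apply: (blk_parity0 adj) => a c; rewrite !odd_even_ht.
have odd_step i : \det (blk (adjM K ^+ i.*2.+1) ev od) = \det (blk (adjM K ^+ i.*2) ev ev).
  by rewrite exprSr (blk_mul KL) Z_od mulmx0 addr0 det_mulmx det_blk_adjM mulr1.
elim: j => [|j IH]; first by rewrite odd_step expr0 (blk1 KL) det1.
rewrite odd_step doubleS exprSr (blk_mul KL) Z_ev mulmx0 add0r det_mulmx IH mul1r.
by rewrite (blk_tr _ _ adjM_tr) det_tr det_blk_adjM.
Qed.

Lemma blk_adjM_pow_inv N : odd N ->
  blk (adjM K ^+ N) ev od *m (blk (invmx (adjM K) ^+ N) ev od)^T = 1.
Proof.
move=> oN; have uA := adjM_unit odd_K.
have AAi : adjM K ^+ N * invmx (adjM K) ^+ N = 1.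
  by rewrite invpow_mul_pow ?leqnn ?subnn ?expr0 // -mulmxE mulmxV.
have := congr1 (fun M => blk M ev ev) AAi; rewrite /= (blk_mul KL) (blk1 KL).
have -> : blk (adjM K ^+ N) ev ev = 0.
  by apply: (blk_parity0 (@parity_pattern_adjM_pow N)) => a c; rewrite !(odd_even_ht KL) oN.
rewrite mul0mx add0r => <-; congr (_ *m _); apply/esym/blk_tr.
by apply: sym_pow; rewrite trmx_inv adjM_tr.
Qed.
End PathBlocks.

Lemma complementary_of_compl k m (r : 'I_k -> nat) (rb : 'I_m -> nat) :
  (forall i j : 'I_k, (i < j)%N -> (r i < r j)%N) ->
  (forall i j : 'I_m, (i < j)%N -> (rb i < rb j)%N) ->
  (forall i, (1 <= r i <= k + m)%N) ->
  (forall x : nat, (exists i, rb i = x) <-> ((1 <= x <= k + m)%N /\ ~ (exists i, r i = x))) ->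
  complementary r rb.
Proof.
move=> r_incr rb_incr r_range rb_set.
have rb_compl j : (1 <= rb j <= k + m)%N /\ ~ (exists i, r i = rb j) by apply/rb_set; exists j.
split=> // [j|i j]; first by case: (rb_compl j).
by apply/eqP => e; case: (rb_compl j) => _; apply; exists i.
Qed.

Section MergedEntries.
Variables (K k m : nat) (r s : 'I_k -> nat) (rb sb : 'I_m -> nat).
Hypotheses (KL : K.+1 = (k + m).*2) (rrb : complementary r rb) (ssb : complementary s sb).

Notation ev := (@even_ht K (k + m)).
Notation od := (@odd_ht K (k + m)).

Lemma even_ht_lshift i : (ev (merge_perm rrb (lshift m i)) : nat) = (2 * r i - 2)%N.
Proof. by rewrite even_htE // permE merge_lshift //; case: rrb => _ _ /(_ i); lia. Qed.

Lemma even_ht_rshift j : (ev (merge_perm rrb (rshift k j)) : nat) = (2 * rb j - 2)%N.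
Proof. by rewrite even_htE // permE merge_rshift //; case: rrb => _ _ _ /(_ j); lia. Qed.

Lemma odd_ht_lshift i : (od (merge_perm ssb (lshift m i)) : nat) = (2 * s i - 1)%N.
Proof. by rewrite odd_htE // permE merge_lshift //; case: ssb => _ _ /(_ i); lia. Qed.

Lemma odd_ht_rshift j : (od (merge_perm ssb (rshift k j)) : nat) = (2 * sb j - 1)%N.
Proof. by rewrite odd_htE // permE merge_rshift //; case: ssb => _ _ _ /(_ j); lia. Qed.
End MergedEntries.

Unset Implicit Arguments.

Theorem theorem24 (n k m : nat) (hn : (1 <= n)%N) (hk : (1 <= k)%N) (hm : (1 <= m)%N)
  (Cneg : nat -> nat -> nat -> rat)
  (hCneg : forall r s : nat, (r <= 2 * k + 2 * m - 1)%N -> (s <= 2 * k + 2 * m - 1)%N ->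
             is_Cneg (2 * k + 2 * m - 1) r s (Cneg r s))
  (r s : 'I_k -> nat) (rb sb : 'I_m -> nat)
  (hr : forall i j : 'I_k, (i < j)%N -> (r i < r j)%N)
  (hs : forall i j : 'I_k, (i < j)%N -> (s i < s j)%N)
  (hr_range : forall i, (1 <= r i <= k + m)%N)
  (hs_range : forall i, (1 <= s i <= k + m)%N)
  (hrb : forall i j : 'I_m, (i < j)%N -> (rb i < rb j)%N)
  (hsb : forall i j : 'I_m, (i < j)%N -> (sb i < sb j)%N)
  (hrb_set : forall x : nat, (exists i, rb i = x) <->
                             ((1 <= x <= k + m)%N /\ ~ (exists i, r i = x)))
  (hsb_set : forall x : nat, (exists i, sb i = x) <->
                             ((1 <= x <= k + m)%N /\ ~ (exists i, s i = x))) :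
  \det (\matrix_(i < k, j < k)
          ((Cpath (2 * k + 2 * m - 1) (2 * n - 1) (2 * r i - 2) (2 * s j - 1))%:R : rat))
  = (-1) ^+ (\sum_(i < m) (rb i + sb i))%N *
    \det (\matrix_(i < m, j < m)
          Cneg (2 * rb i - 2)%N (2 * sb j - 1)%N (2 * n - 1)%N).
Proof.
set K := (2 * k + 2 * m - 1)%N; set N := (2 * n - 1)%N.
have KL : K.+1 = (k + m).*2 by rewrite /K; lia.
have N_odd : N = (n.-1).*2.+1 by rewrite /N; lia.
have oN : odd N by rewrite N_odd /= odd_double.
have rrb := complementary_of_compl hr hrb hr_range hrb_set.
have ssb := complementary_of_compl hs hsb hs_range hsb_set.
(* Both matrices are minors of the even-to-odd blocks of adjM^N and adjM^-N,
   on the rows/columns selected by the merge permutations. *)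
have -> : \matrix_(i < k, j < k) (Cpath K N (2 * r i - 2) (2 * s j - 1))%:R =
    \matrix_(i, j) blk (adjM K ^+ N) (even_ht K) (odd_ht K) (merge_perm rrb (lshift m i))
                                                           (merge_perm ssb (lshift m j)).
  apply/matrixP => i j; rewrite !mxE -Cpath_pow.
  by rewrite (even_ht_lshift KL rrb) (odd_ht_lshift KL ssb).
have -> : \matrix_(i < m, j < m) Cneg (2 * rb i - 2)%N (2 * sb j - 1)%N N =
    \matrix_(i, j) blk (invmx (adjM K) ^+ N) (even_ht K) (odd_ht K)
                     (merge_perm rrb (rshift k i)) (merge_perm ssb (rshift k j)).
  apply/matrixP => i j; rewrite !mxE -(even_ht_rshift KL rrb) -(odd_ht_rshift KL ssb).
  apply: is_Cneg_invpow; [exact: odd_K KL | by apply: hCneg; rewrite -ltnS ltn_ord | lia].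
rewrite (jacobi_complementary _ _ (blk_adjM_pow_inv KL oN)).
by rewrite N_odd det_blk_adjM_pow // mul1r sign_merge_pair.
Qed.
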